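(* The group $G$ contains 3-cycles.
   Context: Fix $m\in\mathbb{N}$, a prime power $q$, and $n\geq 3$. Let $\Delta=\mathrm{Gal}(\mathbb{F}_{q^m}:\mathbb{F}_q)$ act coordinatewise on $\mathbb{F}_{q^m}^n$; $\mathcal{X}$ is the union of orbits of size $m$, $\bar{\mathcal{X}}$ the set of these orbits. The tame automorphism group $\mathrm{TA}_n(\mathbb{F}_q)$ (generated by invertible affine maps and triangular maps $(a_1X_1+f_1,\dots,a_nX_n+f_n)$, $a_i\in\mathbb{F}_q^*$, $f_i\in\mathbb{F}_q[X_{i+1},\dots,X_n]$) acts on $\bar{\mathcal{X}}$, and $G$ is the image of $\mathrm{TA}_n(\mathbb{F}_q)\to\mathrm{Sym}(\bar{\mathcal{X}})$. *)

From HB Require Import structures.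
From mathcomp Require Import all_boot all_order all_algebra all_fingroup.
From mathcomp Require Import mpoly.
Set Implicit Arguments. Unset Strict Implicit. Unset Printing Implicit Defensive.
Import GRing.Theory.
Local Open Scope ring_scope.

(* Setting: F = F_q, L = F_{q^m}, iota : F -> L the field embedding.
   Points of L^n are finite functions 'I_n -> L. *)

Section Tame.
Variables (F L : finFieldType) (iota : {rmorphism F -> L}) (n : nat).

Definition pt := {ffun 'I_n -> L}.

(* Delta = Gal(L : F): field automorphisms of L fixing iota(F) pointwise
   (a ring endomorphism of a finite field is automatically bijective). *)
Definition galois_set : {set {ffun L -> L}} :=
  [set s : {ffun L -> L} |
     [&& s 1 == 1,
         [forall x, forall y, s (x + y) == s x + s y],
         [forall x, forall y, s (x * y) == s x * s y] &
         [forall c : F, s (iota c) == iota c]]].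

Definition gal_act (s : {ffun L -> L}) (x : pt) : pt := [ffun i => s (x i)].

Definition gal_orbit (x : pt) : {set pt} := [set gal_act s x | s in galois_set].

Definition Xset (m : nat) : {set pt} := [set x | #|gal_orbit x| == m].
Definition Xbar (m : nat) : {set {set pt}} := [set gal_orbit x | x in Xset m].

Definition poly_act (P : 'I_n -> {mpoly F[n]}) (x : pt) : pt :=
  [ffun i => mmap iota x (P i)].

Definition affine_map (A : 'M[F]_n) (b : 'I_n -> F) : 'I_n -> {mpoly F[n]} :=
  fun i => \sum_(j < n) (A i j)%:MP * 'X_j + (b i)%:MP.

(* f only involves the variables X_{i+1}, ..., X_n (0-based: X_j with j > i) *)
Definition only_later_vars (i : 'I_n) (f : {mpoly F[n]}) : bool :=
  all (fun mo : 'X_{1..n} => [forall j : 'I_n, (j <= i)%N ==> (mo j == 0%N)])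
      (msupp f).

Definition triangular_map (a : 'I_n -> F) (f : 'I_n -> {mpoly F[n]})
  : 'I_n -> {mpoly F[n]} :=
  fun i => (a i)%:MP * 'X_i + f i.

Definition tame_generator (P : 'I_n -> {mpoly F[n]}) : Prop :=
  (exists (A : 'M[F]_n) (b : 'I_n -> F),
      A \in unitmx /\ P = affine_map A b)
  \/ (exists (a : 'I_n -> F) (f : 'I_n -> {mpoly F[n]}),
      (forall i, a i != 0) /\ (forall i, only_later_vars i (f i)) /\
      P = triangular_map a f).

(* turn a function on a finite type into a permutation (it is only ever
   applied to bijections; the fallback 1 is never used in that case) *)
Definition perm_of (T : finType) (g : T -> T) : {perm T} :=
  match injectiveb g as b return injectiveb g = b -> {perm T} with
  | true => fun h => perm (injectiveP g h)
  | false => fun _ => 1%g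
  end (erefl _).

Definition orbit_perm (m : nat) (P : 'I_n -> {mpoly F[n]}) : {perm {set pt}} :=
  perm_of (fun O : {set pt} =>
             if O \in Xbar m then [set poly_act P x | x in O] else O).

(* G = image of TA_n(F_q) in Sym(Xbar), i.e. the subgroup generated by the
   images of the generators: all finite products of images of generators and
   their inverses. *)
Inductive in_G (m : nat) : {perm {set pt}} -> Prop :=
  | in_G1 : in_G m 1%g
  | in_G_mul (P : 'I_n -> {mpoly F[n]}) (s : {perm {set pt}}) :
      tame_generator P -> in_G m s -> in_G m (orbit_perm m P * s)%g
  | in_G_mulV (P : 'I_n -> {mpoly F[n]}) (s : {perm {set pt}}) :
      tame_generator P -> in_G m s -> in_G m ((orbit_perm m P)^-1 * s)%g.

Definition is_3cycle_on (T : finType) (X : {set T}) (s : {perm T}) : Prop :=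
  exists a b c : T,
    [/\ [/\ a \in X, b \in X & c \in X],
        [/\ a != b, b != c & a != c],
        [/\ s a = b, s b = c & s c = a] &
        (forall y, y \in X -> ~~ (y \in [:: a; b; c]) -> s y = y)].

End Tame.

(* The Galois group is generated by the q-power Frobenius: a Galois element
   is determined by its value on a generator b of the multiplicative group of
   F_{q^m}, and that value is a root of prod_(k < m) (X - b^(q^k)), a
   polynomial with coefficients in F_q.  Hence the points
   z(u, v) = (u, v, b, 0, ..., 0) with u, v in {0, 1} have orbits of size m,
   and a point is conjugate to z(u, v) iff its first two coordinates are u, v,
   its third is a root of that polynomial and the others vanish.  Since
   1 - t^(q^m - 1) is the indicator of t = 0, this last condition is a
   polynomial E in X_3, ..., X_n, so A = (X_1 + [X_2 = 0] E, X_2, ..., X_n)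
   is triangular.  With S the swap of X_1 and X_2, the commutator
   S A S A S A^-1 S A^-1 acts on the first two coordinates of the points
   with E = 1 as (0,0) -> (0,1) -> (1,0) -> (0,0), fixing all other pairs,
   and is the identity where E = 0: it permutes the orbits of z(0,0),
   z(0,1), z(1,0) cyclically and fixes every other orbit. *)

From Pilot Require Import Defs.
From HB Require Import structures.
From mathcomp Require Import all_boot all_order all_algebra all_fingroup.
From mathcomp Require Import mpoly cyclic finfield zify.
Set Implicit Arguments. Unset Strict Implicit. Unset Printing Implicit Defensive.
Import GRing.Theory.
Local Open Scope ring_scope.

Lemma eq_mmap (R S : nzRingType) n (f1 f2 : R -> S) (h1 h2 : 'I_n -> S)
    (p : {mpoly R[n]}) :
  f1 =1 f2 -> h1 =1 h2 -> mmap f1 h1 p = mmap f2 h2 p.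
Proof.
move=> ef eh; apply: eq_bigr => mo _.
by rewrite ef (mmap1_eq _ eh).
Qed.

Lemma rmorph_mmap (R S T : nzRingType) n (f : R -> S) (g : {rmorphism S -> T})
    (h : 'I_n -> S) (p : {mpoly R[n]}) :
  g (mmap f h p) = mmap (g \o f) (g \o h) p.
Proof.
rewrite rmorph_sum; apply: eq_bigr => mo _; rewrite rmorphM rmorph_prod.
by congr (_ * _); apply: eq_bigr => i _; rewrite rmorphXn.
Qed.

Lemma expf_card_pred (K : finFieldType) (x : K) : x != 0 -> x ^+ #|K|.-1 = 1.
Proof.
move=> x_nz; apply: (mulfI x_nz); rewrite mulr1 -exprS prednK ?expf_card //.
exact/ltnW/finNzRing_gt1.
Qed.

Lemma exists_prim_root (K : finFieldType) :
  exists b : K, (#|K|.-1).-primitive_root b.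
Proof.
have /hasP[b _ ?] : has (#|K|.-1).-primitive_root (enum (predC1 (0 : K))).
  apply: has_prim_root; rewrite ?enum_uniq // -?cardE ?cardC1 //.
    by rewrite -ltnS prednK ?finNzRing_gt1 // ltnW // finNzRing_gt1.
  by apply/allP => x; rewrite mem_enum unity_rootE => /expf_card_pred ->.
by exists b.
Qed.

Section Frobenius.
Variables (F L : finFieldType) (iota : {rmorphism F -> L}).
Local Notation q := #|F|.

Lemma galois_setP (s : {ffun L -> L}) :
  reflect [/\ s 1 = 1, {morph s : x y / x + y}, {morph s : x y / x * y}
            & forall c, s (iota c) = iota c]
          (s \in galois_set iota).
Proof.
rewrite inE; apply: (iffP and4P) => [[/eqP s1 sD sM sI] | [s1 sD sM sI]].
  split=> // [x y | x y | c]; apply/eqP.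
  - by move/forallP/(_ x)/forallP/(_ y): sD.
  - by move/forallP/(_ x)/forallP/(_ y): sM.
  - by move/forallP/(_ c): sI.
split; first exact/eqP.
- by apply/forallP => x; apply/forallP => y; rewrite sD.
- by apply/forallP => x; apply/forallP => y; rewrite sM.
- by apply/forallP => c; rewrite sI.
Qed.

Section GaloisElement.
Variable s : {ffun L -> L}.
Hypothesis s_gal : s \in galois_set iota.

Fact galois_nmod_morphism : nmod_morphism s.
Proof.
case/galois_setP: s_gal => _ sD _ _; split=> //.
by apply: (addrI (s 0)); rewrite -sD !addr0.
Qed.

Fact galois_monoid_morphism : monoid_morphism s.
Proof. by case/galois_setP: s_gal. Qed.

Definition galois_rmorph : {rmorphism L -> L} :=
  HB.pack (fun_of_fin s)
    (GRing.isNmodMorphism.Build _ _ _ galois_nmod_morphism)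
    (GRing.isMonoidMorphism.Build _ _ _ galois_monoid_morphism).

Lemma galois_rmorphE : galois_rmorph =1 s. Proof. by []. Qed.

Lemma galois_iota c : s (iota c) = iota c.
Proof. by case/galois_setP: s_gal. Qed.

Lemma galois_mmap n (h : 'I_n -> L) (p : {mpoly F[n]}) :
  s (mmap iota h p) = mmap iota (fun i => s (h i)) p.
Proof.
by rewrite -galois_rmorphE rmorph_mmap; apply: eq_mmap => // c; apply: galois_iota.
Qed.

Lemma galois_root (p : {poly F}) x :
  root (map_poly iota p) x -> root (map_poly iota p) (s x).
Proof.
move=> /rootP px; apply/rootP; rewrite -galois_rmorphE.
have -> : map_poly iota p = map_poly galois_rmorph (map_poly iota p).
  by rewrite -map_poly_comp; apply: eq_map_poly => c; rewrite /= galois_iota.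
by rewrite horner_map px rmorph0.
Qed.

End GaloisElement.

Lemma pchar_nat_card : [pchar L].-nat q.
Proof.
have [p p_pr pF] := finPcharP F.
by rewrite (card_pprimeChar pF) pnatX (pnatE _ p_pr) (rmorph_pchar iota pF).
Qed.

Definition frob k : {ffun L -> L} := [ffun x => x ^+ (q ^ k)].

Lemma frob_galois k : frob k \in galois_set iota.
Proof.
apply/galois_setP; split=> [|x y|x y|c]; rewrite !ffunE ?expr1n ?exprMn //.
  by apply: exprDn_pchar; rewrite pnatX pchar_nat_card.
rewrite -rmorphXn; congr (iota _).
by elim: k => [|k IHk]; rewrite ?expr1 // expnSr exprM IHk expf_card.
Qed.

Lemma frob_frob i j x : frob i (frob j x) = frob (i + j) x.
Proof. by rewrite !ffunE -exprM -expnD addnC. Qed.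

Lemma frob0 x : frob 0 x = x.
Proof. by rewrite ffunE expr1. Qed.

Lemma frob_zero k : frob k 0 = 0.
Proof. exact: rmorph0 (galois_rmorph (frob_galois k)). Qed.

Lemma frob_one k : frob k 1 = 1.
Proof. exact: rmorph1 (galois_rmorph (frob_galois k)). Qed.

Lemma frob_fixed_iota x : frob 1 x = x -> exists c, x = iota c.
Proof.
rewrite ffunE expn1 => xq.
have [/existsP[c /eqP ->]|notF] := boolP [exists c, x == iota c]; first by exists c.
pose rs := x :: [seq iota c | c <- enum F].
have Xq_size : size ('X^q - 'X : {poly L}) = q.+1.
  by rewrite size_polyDl ?size_polyXn // size_polyN size_polyX ltnS finNzRing_gt1.
have : (size rs < size (('X^q - 'X)%R : {poly L}))%N.
  apply: max_poly_roots; first by rewrite -size_poly_eq0 Xq_size.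
    apply/allP => y; rewrite inE => /orP[/eqP -> | /mapP[c _ ->]];
      by rewrite rootE !hornerE ?xq -?rmorphXn ?expf_card subrr.
  rewrite /= map_inj_uniq ?enum_uniq ?andbT; last exact: fmorph_inj.
  by apply/mapP => -[c _ xc]; case/existsP: notF; exists c; apply/eqP.
by rewrite Xq_size /= size_map -cardE ltnn.
Qed.

End Frobenius.

Arguments frob F {L} k.

Lemma expn_lt_pred_exp q k m : (1 < q)%N -> (1 < m)%N -> (k < m)%N ->
  (q ^ k < (q ^ m).-1)%N.
Proof.
move=> q_gt1 m_gt1 lt_km; have : (0 < q ^ k)%N by rewrite expn_gt0 ltnW.
have : (q ^ k * q <= q ^ m)%N by rewrite -expnSr leq_pexp2l // ltnW.
have : (q * q <= q ^ m)%N by rewrite mulnn leq_pexp2l // ltnW.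
move: (q ^ k)%N (q ^ m)%N => a Q; nia.
Qed.

Section FrobeniusOrbits.
Variables (F L : finFieldType) (iota : {rmorphism F -> L}) (m : nat).
Hypothesis cardL : #|L| = (#|F| ^ m)%N.
Hypothesis m_gt0 : (0 < m)%N.
Local Notation frob := (@frob F L).

Lemma frob_mod k x : frob k x = frob (k %% m) x.
Proof.
have frob_m y : frob m y = y by rewrite ffunE -cardL expf_card.
rewrite {1}(divn_eq k m) -frob_frob; elim: (k %/ m)%N => [|a IHa].
  by rewrite mul0n frob0.
by rewrite mulSn -frob_frob IHa frob_m.
Qed.

Section PrimitiveElement.
Variable b : L.
Hypothesis b_prim : (#|L|.-1).-primitive_root b.

Lemma galois_eq_prim s t : s \in galois_set iota -> t \in galois_set iota ->
  s b = t b -> s = t.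
Proof.
move=> s_gal t_gal stb; apply/ffunP => x.
rewrite -(galois_rmorphE s_gal) -(galois_rmorphE t_gal).
have [-> | x_nz] := eqVneq x 0; first by rewrite !rmorph0.
have [j ->] := prim_rootP b_prim (expf_card_pred x_nz).
by rewrite !rmorphXn /= stb.
Qed.

Lemma frob_prim_inj : injective (fun k : 'I_m => frob k b).
Proof.
move=> i j; rewrite /= !ffunE => /eqP; rewrite (eq_prim_root_expr b_prim).
have q_gt1 := finNzRing_gt1 F.
have [m_le1 | m_gt1] := leqP m 1.
  by move: (ltn_ord i) (ltn_ord j) => ? ? _; apply: ord_inj; lia.
rewrite cardL !modn_small ?expn_lt_pred_exp // eqn_exp2l // => /eqP ij.
exact: val_inj.
Qed.

Definition frob_poly : {poly L} := \prod_(k < m) ('X - (frob k b)%:P).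

Lemma root_frob_poly x :
  root frob_poly x = (x \in [seq frob k b | k : 'I_m <- enum 'I_m]).
Proof. by rewrite -root_prod_XsubC big_map big_enum. Qed.

Lemma frob_poly_frob :
  map_poly (galois_rmorph (frob_galois iota 1)) frob_poly = frob_poly.
Proof.
rewrite (big_morph (map_poly _) (rmorphM _) (rmorph1 _)).
under eq_bigr => k _ do rewrite map_polyXsubC /= frob_frob.
have frob_m : frob m b = frob 0 b by rewrite frob_mod modnn.
move: frob_m; rewrite /frob_poly; case: (m) m_gt0 => // m' _ frob_m.
by rewrite big_ord_recr big_ord_recl /= mulrC add1n frob_m.
Qed.

Lemma frob_poly_over : exists mu : {poly F}, map_poly iota mu = frob_poly.
Proof.
have fixed i : frob 1 frob_poly`_i = frob_poly`_i.
  by rewrite -(galois_rmorphE (frob_galois iota 1)) -coef_map frob_poly_frob.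
pose pre x := odflt 0 [pick c | iota c == x].
exists (\poly_(i < size frob_poly) pre frob_poly`_i); apply/polyP => i.
rewrite coef_map coef_poly.
case: ltnP => [_ | le_size]; last by rewrite raddf0 nth_default.
rewrite /pre; case: pickP => [c /eqP // | none].
by have [c ec] := frob_fixed_iota iota (fixed i); move: (none c); rewrite ec eqxx.
Qed.

Lemma galois_set_frob s : s \in galois_set iota -> exists k : 'I_m, s = frob k.
Proof.
move=> s_gal; have [mu mu_frob] := frob_poly_over.
have : root frob_poly (s b).
  rewrite -mu_frob; apply: galois_root => //; rewrite mu_frob root_frob_poly.
  by apply/mapP; exists (Ordinal m_gt0); rewrite ?mem_enum ?frob0.
rewrite root_frob_poly => /mapP[k _ sb]; exists k.
exact: galois_eq_prim (frob_galois iota k) sb.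
Qed.

End PrimitiveElement.

Lemma gal_orbitE n (x : pt L n) :
  gal_orbit iota x = [set gal_act (frob k) x | k : 'I_m].
Proof.
have [b b_prim] := exists_prim_root L.
apply/setP => y; apply/imsetP/imsetP => [[s s_gal ->] | [k _ ->]].
  by have [k ->] := galois_set_frob b_prim s_gal; exists k.
by exists (frob k); rewrite ?frob_galois.
Qed.

Lemma gal_actE n s (x : pt L n) i : gal_act s x i = s (x i).
Proof. exact: ffunE. Qed.

Lemma gal_act_frob n (x : pt L n) i j :
  gal_act (frob i) (gal_act (frob j) x) = gal_act (frob ((i + j) %% m)) x.
Proof. by apply/ffunP => k; rewrite !gal_actE frob_frob -frob_mod. Qed.

Lemma gal_act_frob0 n (x : pt L n) : gal_act (frob 0) x = x.
Proof. by apply/ffunP => i; rewrite gal_actE frob0. Qed.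

Lemma mem_gal_orbit_frob n (x : pt L n) k :
  gal_act (frob k) x \in gal_orbit iota x.
Proof. by apply/imsetP; exists (frob k); rewrite ?frob_galois. Qed.

Lemma gal_orbit_refl n (x : pt L n) : x \in gal_orbit iota x.
Proof. by rewrite -{1}(gal_act_frob0 x) mem_gal_orbit_frob. Qed.

Lemma gal_orbit_sub n (x y : pt L n) :
  x \in gal_orbit iota y -> gal_orbit iota x \subset gal_orbit iota y.
Proof.
rewrite !gal_orbitE => /imsetP[j _ ->]; apply/subsetP => _ /imsetP[i _ ->].
by rewrite gal_act_frob -gal_orbitE mem_gal_orbit_frob.
Qed.

Lemma gal_orbit_sym n (x y : pt L n) :
  x \in gal_orbit iota y -> y \in gal_orbit iota x.
Proof.
rewrite gal_orbitE => /imsetP[j _ ->].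
have jK : ((m - j + j) %% m = 0)%N by rewrite subnK ?modnn // ltnW.
by rewrite -{1}(gal_act_frob0 y) -jK -gal_act_frob mem_gal_orbit_frob.
Qed.

Lemma gal_orbit_eq n (x y : pt L n) :
  x \in gal_orbit iota y -> gal_orbit iota x = gal_orbit iota y.
Proof.
move=> xy; apply/eqP; rewrite eqEsubset !gal_orbit_sub //.
exact: gal_orbit_sym.
Qed.

End FrobeniusOrbits.

Lemma perm_ofE (T : finType) (g : T -> T) : injective g -> Defs.perm_of g =1 g.
Proof.
move=> g_inj x; rewrite /Defs.perm_of.
suff gen b (e : injectiveb g = b) :
    (match b as b0 return injectiveb g = b0 -> {perm T} with
     | true => fun h => perm (injectiveP g h)
     | false => fun _ => 1%g end e) x = g x by apply: gen.
by case: b e => e; [rewrite permE | move/injectiveP: g_inj; rewrite e].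
Qed.

Section InducedPermutation.
Variables (F L : finFieldType) (iota : {rmorphism F -> L}) (n m : nat).
Local Notation X := (Xset iota n m).
Local Notation orbit := (gal_orbit iota).
Local Notation act P := (poly_act iota P).

Lemma poly_act_gal P s (x : pt L n) : s \in galois_set iota ->
  act P (gal_act s x) = gal_act s (act P x).
Proof.
move=> s_gal; apply/ffunP => i; rewrite !ffunE galois_mmap //.
by apply: eq_mmap => // j; rewrite ffunE.
Qed.

Lemma gal_orbit_poly_act P (x : pt L n) : orbit (act P x) = act P @: orbit x.
Proof.
rewrite /gal_orbit -imset_comp; apply: eq_in_imset => s s_gal.
by rewrite /= poly_act_gal.
Qed.

Definition induced_by (s : {perm {set pt L n}}) (h : pt L n -> pt L n) :=
  {in X, forall x, h x \in X /\ s (orbit x) = orbit (h x)}.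

Lemma induced_byM s t h k :
  induced_by s h -> induced_by t k -> induced_by (s * t) (k \o h).
Proof.
move=> sh tk x /sh[hx_X sx]; have [khx_X thx] := tk _ hx_X.
by rewrite permM sx thx.
Qed.

Section Injective.
Variable P : 'I_n -> {mpoly F[n]}.
Hypothesis act_inj : injective (act P).

Lemma Xset_poly_act x : (act P x \in X) = (x \in X).
Proof. by rewrite !inE gal_orbit_poly_act card_imset. Qed.

Lemma orbit_permE O :
  orbit_perm iota m P O = if O \in Xbar iota n m then act P @: O else O.
Proof.
rewrite /orbit_perm perm_ofE // => O1 O2.
have Xbar_act O' : O' \in Xbar iota n m -> act P @: O' \in Xbar iota n m.
  by case/imsetP => x x_X ->; rewrite -gal_orbit_poly_act imset_f ?Xset_poly_act.
case: ifP => O1X; case: ifP => O2X; first exact: imset_inj.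
- by move=> e; move: O2X; rewrite -e Xbar_act.
- by move=> e; move: O1X; rewrite e Xbar_act.
- by [].
Qed.

Lemma orbit_perm_induced : induced_by (orbit_perm iota m P) (act P).
Proof.
move=> x x_X; rewrite Xset_poly_act orbit_permE gal_orbit_poly_act.
by rewrite imset_f.
Qed.

Lemma orbit_permV_induced g : cancel g (act P) ->
  induced_by (orbit_perm iota m P)^-1 g.
Proof.
move=> gK x x_X; have gx_X : g x \in X by rewrite -Xset_poly_act gK.
split=> //; apply: (canLR (permK _)).
by have [_ ->] := orbit_perm_induced gx_X; rewrite gK.
Qed.

End Injective.
End InducedPermutation.

Section VarFree.
Variables (R : nzRingType) (n : nat) (i : 'I_n).

Definition var_free_pred (p : {mpoly R[n]}) :=
  all (fun mo : 'X_{1..n} => mo i == 0%N) (msupp p).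
Arguments var_free_pred _ /.
Definition var_free := [qualify a p | var_free_pred p].

Lemma var_freeP p :
  reflect (forall mo : 'X_{1..n}, mo i != 0%N -> p@_mo = 0) (p \is a var_free).
Proof.
apply: (iffP allP) => p_free mo; last first.
  by rewrite mcoeff_msupp; apply: contraR => /p_free ->; rewrite eqxx.
by apply: contraNeq; rewrite -mcoeff_msupp => /p_free.
Qed.

Lemma var_freeC c : c%:MP \is a var_free.
Proof.
apply/var_freeP => mo mo_i; rewrite mcoeffC; case: eqP => [mo0 | _].
  by move: mo_i; rewrite mo0 mnm0E.
by rewrite mulr0.
Qed.

Lemma var_freeX j : j != i -> 'X_j \is a var_free.
Proof.
move=> ji; apply/var_freeP => mo mo_i; rewrite mcoeffX; case: eqP => // jmo.
by move: mo_i; rewrite -jmo mnm1E (negbTE ji).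
Qed.

Fact var_free_subring_closed : subring_closed var_free.
Proof.
split=> [|p r|p r]; first by rewrite -mpolyC1 var_freeC.
  move=> /var_freeP p_free /var_freeP r_free; apply/var_freeP => mo mo_i.
  by rewrite mcoeffB p_free ?r_free ?subr0.
move=> /var_freeP p_free /var_freeP r_free; apply/var_freeP => mo mo_i.
rewrite mcoeffM big1 // => k /eqP mo_k.
have : (k.1 i + k.2 i != 0)%N by rewrite -mnmDE -mo_k.
rewrite addn_eq0 negb_and => /orP[/p_free -> | /r_free ->].
  by rewrite mul0r.
by rewrite mulr0.
Qed.

HB.instance Definition _ :=
  GRing.isSubringClosed.Build {mpoly R[n]} var_free_pred var_free_subring_closed.

End VarFree.

Arguments var_free {R n} i.

Section PlaneCommutator.
Variable R : nzRingType.
Implicit Types (e : bool) (u v : R) (p : R * R).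

Definition shear2 e p : R * R := (p.1 + ((p.2 == 0) && e)%:R, p.2).
Definition unshear2 e p : R * R := (p.1 - ((p.2 == 0) && e)%:R, p.2).
Definition swap2 p : R * R := (p.2, p.1).
Definition comm2 e p :=
  swap2 (shear2 e (swap2 (shear2 e (swap2 (unshear2 e (swap2 (unshear2 e p))))))).
Definition cycle2 : seq (R * R) := [:: (0, 0); (0, 1); (1, 0)].

Lemma uniq_cycle2 : uniq cycle2.
Proof.
have one_nz := oner_neq0 R.
by rewrite /= !inE !xpair_eqE !eqxx (negbTE one_nz) eq_sym (negbTE one_nz).
Qed.

Lemma swap_shear2_nz e u v : v != 0 -> swap2 (shear2 e (u, v)) = (v, u).
Proof. by move=> /negbTE v_nz; rewrite /shear2 /= v_nz addr0. Qed.

Lemma swap_unshear2_nz e u v : v != 0 -> swap2 (unshear2 e (u, v)) = (v, u).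
Proof. by move=> /negbTE v_nz; rewrite /unshear2 /= v_nz subr0. Qed.

Lemma swap_shear2_0 u v : v = 0 -> swap2 (shear2 true (u, v)) = (0, u + 1).
Proof. by move->; rewrite /shear2 /= eqxx. Qed.

Lemma swap_unshear2_0 u v : v = 0 -> swap2 (unshear2 true (u, v)) = (0, u - 1).
Proof. by move->; rewrite /unshear2 /= eqxx. Qed.

Lemma shear2K e : cancel (unshear2 e) (shear2 e).
Proof. by case=> u v; rewrite /shear2 /unshear2 /= subrK. Qed.

Lemma unshear2K e : cancel (shear2 e) (unshear2 e).
Proof. by case=> u v; rewrite /shear2 /unshear2 /= addrK. Qed.

Lemma swap2K : involutive swap2.
Proof. by case. Qed.

Lemma comm2_false p : comm2 false p = p.
Proof.
by case: p => u v; rewrite /comm2 /shear2 /unshear2 !andbF /= !subr0 !addr0.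
Qed.

(* The steps are instantiated explicitly: an open pattern [(_, _)] would also
   match the outer [swap2 _] terms, by eta-expansion of pairs. *)
Lemma comm2_cycle2 :
  [/\ comm2 true (0, 0) = (0, 1), comm2 true (0, 1) = (1, 0)
    & comm2 true (1, 0) = (0, 0)].
Proof.
have one_nz := oner_neq0 R.
have m1_nz : (0 - 1 : R) != 0 by rewrite sub0r oppr_eq0.
split; rewrite /comm2.
- rewrite (swap_unshear2_0 0 (erefl _)) (swap_unshear2_nz _ 0 m1_nz).
  by rewrite (swap_shear2_0 _ (erefl _)) (swap_shear2_0 0 (subrK 1 0)) add0r.
- rewrite (swap_unshear2_nz _ 0 one_nz) (swap_unshear2_0 1 (erefl _)).
  by rewrite (swap_shear2_0 0 (subrr 1)) add0r (swap_shear2_nz _ 0 one_nz).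
- rewrite (swap_unshear2_0 1 (erefl _)) (swap_unshear2_0 0 (subrr 1)).
  by rewrite (swap_shear2_nz _ 0 m1_nz) (swap_shear2_0 _ (erefl _)) subrK.
Qed.

Lemma comm2_fix p : p \notin cycle2 -> comm2 true p = p.
Proof.
case: p => u v; rewrite !inE !xpair_eqE /comm2.
have [v0 | v_nz] := eqVneq v 0.
  rewrite !andbT => /norP[u_nz /norP[_ u_n1]].
  have u1_nz : u - 1 != 0 by rewrite subr_eq0.
  rewrite (swap_unshear2_0 u v0) (swap_unshear2_nz _ 0 u1_nz).
  by rewrite (swap_shear2_0 _ (erefl _)) subrK (swap_shear2_nz _ 0 u_nz) v0.
have [u0 | u_nz] := eqVneq u 0.
  rewrite /= andbF orbF => v_n1; have v1_nz : v - 1 != 0 by rewrite subr_eq0.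
  rewrite (swap_unshear2_nz _ u v_nz) (swap_unshear2_0 v u0).
  by rewrite (swap_shear2_nz _ 0 v1_nz) (swap_shear2_0 _ (erefl _)) subrK u0.
rewrite (swap_unshear2_nz _ u v_nz) (swap_unshear2_nz _ v u_nz).
by rewrite (swap_shear2_nz _ u v_nz) (swap_shear2_nz _ v u_nz).
Qed.

End PlaneCommutator.

Lemma mmapXU (R S : nzRingType) n (f : {rmorphism R -> S}) (h : 'I_n -> S) i :
  mmap f h 'X_i = h i.
Proof. by rewrite mmapX mmap1U. Qed.

Lemma only_later_vars0 (F : finFieldType) n (f : {mpoly F[n.+1]}) :
  f \is a var_free ord0 -> only_later_vars ord0 f.
Proof.
move=> /var_freeP f_free; apply/allP => mo; rewrite mcoeff_msupp => mo_supp.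
apply/forallP => j; apply/implyP; rewrite leqn0 => /eqP j0.
have -> : j = ord0 by apply: val_inj.
by apply: contraR mo_supp => /f_free ->; rewrite eqxx.
Qed.

Section ThreeCycle.
Variables (F L : finFieldType) (iota : {rmorphism F -> L}) (m n' : nat).
Hypothesis cardL : #|L| = (#|F| ^ m)%N.
Hypothesis m_gt0 : (0 < m)%N.
Variables (b : L) (mu : {poly F}).
Hypothesis b_prim : (#|L|.-1).-primitive_root b.
Hypothesis mu_frob : map_poly iota mu = frob_poly F m b.
Local Notation n := n'.+3.
Local Notation X := (Xset iota n m).
Local Notation orbit := (gal_orbit iota).
Local Notation act P := (poly_act iota P).
Implicit Types (x : pt L n) (p : L * L) (P : {mpoly F[n]}).

Definition i0 : 'I_n := ord0.
Definition i1 : 'I_n := inord 1.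
Definition i2 : 'I_n := inord 2.

Lemma i10 : i1 != i0. Proof. by rewrite -val_eqE /= inordK. Qed.
Lemma i20 : i2 != i0. Proof. by rewrite -val_eqE /= inordK. Qed.
Lemma i21 : i2 != i1. Proof. by rewrite -val_eqE /= !inordK. Qed.

Lemma tail_ordE (j : 'I_n) : (3 <= j)%N = [&& j != i0, j != i1 & j != i2].
Proof. by rewrite -!val_eqE /= !inordK //; case: j => [[|[|[|j]]]]. Qed.

Definition set01 (x : pt L n) (p : L * L) : pt L n :=
  [ffun i => if i == i0 then p.1 else if i == i1 then p.2 else x i].

Lemma set01_i0 x p : set01 x p i0 = p.1.
Proof. by rewrite ffunE eqxx. Qed.

Lemma set01_i1 x p : set01 x p i1 = p.2.
Proof. by rewrite ffunE (negbTE i10) eqxx. Qed.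

Lemma set01_out x p j : j != i0 -> j != i1 -> set01 x p j = x j.
Proof. by move=> /negbTE j0 /negbTE j1; rewrite ffunE j0 j1. Qed.

Lemma set01_id x : set01 x (x i0, x i1) = x.
Proof.
by apply/ffunP => i; rewrite ffunE; case: eqP => [-> | _] //; case: eqP => [-> | _].
Qed.

Lemma set01_set01 x p p' : set01 (set01 x p) p' = set01 x p'.
Proof. by apply/ffunP => i; rewrite !ffunE; case: (i == i0); case: (i == i1). Qed.

Definition special (x : pt L n) : bool :=
  root (frob_poly F m b) (x i2) && [forall j : 'I_n, (3 <= j)%N ==> (x j == 0)].

Lemma special_set01 x p : special (set01 x p) = special x.
Proof.
rewrite /special set01_out ?i20 ?i21 //; congr (_ && _).
apply: eq_forallb => j; apply: implyb_id2l; rewrite tail_ordE => /and3P[j0 j1 _].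
by rewrite set01_out.
Qed.

Definition zero_test (P : {mpoly F[n]}) : {mpoly F[n]} := 1 - P ^+ #|L|.-1.

Definition special_poly : {mpoly F[n]} :=
  zero_test (map_poly (@mpolyC n F) mu).['X_i2] *
  \prod_(j : 'I_n | (3 <= j)%N) zero_test 'X_j.

Lemma mmap_zero_test x P :
  mmap iota x (zero_test P) = (mmap iota x P == 0)%:R.
Proof.
rewrite rmorphB rmorph1 rmorphXn /=.
have [-> | nz] := eqVneq (mmap iota x P) 0; last by rewrite expf_card_pred ?subrr.
have : (#|L|.-1 != 0)%N by rewrite -lt0n ltn_predRL finNzRing_gt1.
by rewrite expr0n => /negbTE ->; rewrite subr0.
Qed.

Lemma mmap_special_poly x : mmap iota x special_poly = (special x)%:R.
Proof.
rewrite rmorphM rmorph_prod /= mmap_zero_test -horner_map /= mmapXU.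
rewrite -map_poly_comp (eq_map_poly (g := iota)) => [|c]; last exact: mmapC.
rewrite mu_frob -/(root _ _) /special.
case: (boolP [forall j, _]) => [/forallP all0 | /forallPn[j]].
  rewrite big1 ?mulr1 ?andbT // => j tail_j.
  by rewrite mmap_zero_test mmapXU (eqP (implyP (all0 j) tail_j)) eqxx.
rewrite negb_imply => /andP[tail_j xj_nz].
by rewrite (bigD1 j) //= mmap_zero_test mmapXU (negbTE xj_nz) mul0r mulr0 andbF.
Qed.

Definition shear_poly : {mpoly F[n]} := zero_test 'X_i1 * special_poly.

Definition shear_map : 'I_n -> {mpoly F[n]} :=
  triangular_map (fun=> 1) (fun i => if i == i0 then shear_poly else 0).

Definition swap_map : 'I_n -> {mpoly F[n]} :=
  affine_map (perm_mx (tperm i0 i1)) (fun=> 0).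

Lemma act_shear x : act shear_map x = set01 x (shear2 (special x) (x i0, x i1)).
Proof.
apply/ffunP => i; rewrite !ffunE /triangular_map rmorphD rmorphM /=.
rewrite mpolyC1 rmorph1 mul1r mmapXU.
case: eqP => [-> | _].
  rewrite /shear_poly rmorphM /= mmap_zero_test mmapXU mmap_special_poly.
  by rewrite -natrM mulnb.
by rewrite raddf0 addr0; case: eqP => [-> |].
Qed.

Lemma act_swap x : act swap_map x = set01 x (swap2 (x i0, x i1)).
Proof.
apply/ffunP => i; rewrite !ffunE /affine_map rmorphD rmorph_sum /=.
rewrite mpolyC0 raddf0 addr0 (bigD1 (tperm i0 i1 i)) //= big1 ?addr0 => [|j ji].
  rewrite !mxE eqxx mpolyC1 mul1r mmapXU.
  case: tpermP => [-> | -> | /eqP/negbTE-> /eqP/negbTE->] //.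
  by rewrite eqxx (negbTE i10).
by rewrite !mxE eq_sym (negbTE ji) mpolyC0 mul0r raddf0.
Qed.

Lemma act_shear_set01 x p :
  act shear_map (set01 x p) = set01 x (shear2 (special x) p).
Proof. by rewrite act_shear set01_i0 set01_i1 special_set01 set01_set01; case: p. Qed.

Lemma act_swap_set01 x p : act swap_map (set01 x p) = set01 x (swap2 p).
Proof. by rewrite act_swap set01_i0 set01_i1 set01_set01; case: p. Qed.

Definition unshear_pt (x : pt L n) : pt L n :=
  set01 x (unshear2 (special x) (x i0, x i1)).

Lemma unshear_pt_set01 x p : unshear_pt (set01 x p) = set01 x (unshear2 (special x) p).
Proof. by rewrite /unshear_pt set01_i0 set01_i1 special_set01 set01_set01; case: p. Qed.

Lemma act_shearK : cancel (act shear_map) unshear_pt.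
Proof. by move=> x; rewrite act_shear unshear_pt_set01 unshear2K set01_id. Qed.

Lemma unshear_ptK : cancel unshear_pt (act shear_map).
Proof. by move=> x; rewrite act_shear_set01 shear2K set01_id. Qed.

Lemma act_swapK : involutive (act swap_map).
Proof.
by move=> x; rewrite [act swap_map x]act_swap act_swap_set01 swap2K set01_id.
Qed.

Definition comm_pt : pt L n -> pt L n :=
  act swap_map \o act shear_map \o act swap_map \o act shear_map \o
  act swap_map \o unshear_pt \o act swap_map \o unshear_pt.

Lemma comm_ptE x : comm_pt x = set01 x (comm2 (special x) (x i0, x i1)).
Proof.
rewrite /comm_pt /= -{1}(set01_id x) unshear_pt_set01.
by rewrite !(act_swap_set01, act_shear_set01, unshear_pt_set01).
Qed.

Local Notation shear_perm := (orbit_perm iota m shear_map).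
Local Notation swap_perm := (orbit_perm iota m swap_map).

(* Since [(s * t) O = t (s O)], the factors act from left to right, in the
   order of [comm_pt] read from the right. *)
Definition comm_perm : {perm {set pt L n}} :=
  shear_perm^-1 * (swap_perm^-1 * (shear_perm^-1 * (swap_perm^-1 *
    (shear_perm * (swap_perm * (shear_perm * swap_perm)))))).

Lemma var_free_zero_test (j : 'I_n) P :
  P \is a var_free j -> zero_test P \is a var_free j.
Proof. by move=> Pj; rewrite rpredB ?rpred1 ?rpredX. Qed.

Lemma shear_map_tame : tame_generator shear_map.
Proof.
right; exists (fun=> 1), (fun i => if i == i0 then shear_poly else 0).
split=> [_|]; first exact: oner_neq0.
split=> // i; case: eqP => [-> | _]; last by rewrite /only_later_vars msupp0.
apply: only_later_vars0; rewrite !rpredM ?var_free_zero_test ?var_freeX ?i10 //.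
  rewrite horner_coef rpred_sum // => k _.
  by rewrite coef_map rpredM ?var_freeC ?rpredX ?var_freeX ?i20.
rewrite rpred_prod // => j; rewrite tail_ordE => /and3P[j0 _ _].
by rewrite var_free_zero_test ?var_freeX.
Qed.

Lemma swap_map_tame : tame_generator swap_map.
Proof. by left; exists (perm_mx (tperm i0 i1)), (fun=> 0); rewrite unitmx_perm. Qed.

Lemma comm_perm_in_G : in_G iota m comm_perm.
Proof.
have gen (G : 'I_n -> {mpoly F[n]}) :
    tame_generator G -> in_G iota m (orbit_perm iota m G).
  by move=> G_tame; have := in_G_mul G_tame (in_G1 iota n m); rewrite mulg1.
do 4 (apply: in_G_mulV; [first [exact: shear_map_tame | exact: swap_map_tame] |]).
do 3 (apply: in_G_mul; [first [exact: shear_map_tame | exact: swap_map_tame] |]).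
exact/gen/swap_map_tame.
Qed.

Lemma comm_perm_induced : induced_by iota m comm_perm comm_pt.
Proof.
have shear_inj := can_inj act_shearK; have swap_inj := inv_inj act_swapK.
rewrite /comm_perm /comm_pt.
do 2 (apply: induced_byM (orbit_permV_induced shear_inj unshear_ptK) _;
      apply: induced_byM (orbit_permV_induced swap_inj act_swapK) _).
apply: induced_byM (orbit_perm_induced shear_inj) _.
apply: induced_byM (orbit_perm_induced swap_inj) _.
apply: induced_byM (orbit_perm_induced shear_inj) _.
exact: orbit_perm_induced swap_inj.
Qed.

Definition beta_pt : pt L n := [ffun i => if i == i2 then b else 0].

Definition zpt p : pt L n := set01 beta_pt p.

Lemma zpt_i2 p : zpt p i2 = b.
Proof. by rewrite set01_out ?i20 ?i21 // ffunE eqxx. Qed.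

Lemma special_zpt p : special (zpt p).
Proof.
rewrite special_set01 /special ffunE eqxx root_frob_poly.
apply/andP; split.
  by apply/mapP; exists (Ordinal m_gt0); rewrite ?mem_enum ?frob0.
apply/forallP => j; apply/implyP; rewrite tail_ordE => /and3P[_ _ j2].
by rewrite ffunE (negbTE j2).
Qed.

Lemma Xset_zpt p : zpt p \in X.
Proof.
rewrite inE (gal_orbitE iota cardL m_gt0) card_imset ?card_ord // => k k'.
move/(congr1 (fun y : pt L n => y i2)); rewrite !gal_actE zpt_i2.
exact: (frob_prim_inj cardL m_gt0 b_prim).
Qed.

Lemma frob_cycle2 k p : p \in cycle2 L -> frob F k p.1 = p.1 /\ frob F k p.2 = p.2.
Proof.
by rewrite !inE => /or3P[] /eqP -> /=; rewrite ?frob_zero ?frob_one.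
Qed.

Lemma mem_orbit_zpt x : special x -> (x i0, x i1) \in cycle2 L ->
  x \in orbit (zpt (x i0, x i1)).
Proof.
case/andP; rewrite root_frob_poly => /mapP[k _ x2] /forallP x_tail x01.
have [fx0 fx1] := frob_cycle2 k x01.
rewrite (gal_orbitE iota cardL m_gt0); apply/imsetP; exists k => //.
apply/ffunP => j; rewrite gal_actE.
have [-> | j0] := eqVneq j i0; first by rewrite set01_i0 fx0.
have [-> | j1] := eqVneq j i1; first by rewrite set01_i1 fx1.
have [-> | j2] := eqVneq j i2; first by rewrite zpt_i2 x2.
rewrite set01_out // [beta_pt j]ffunE (negbTE j2).
have tail_j : (3 <= j)%N by rewrite tail_ordE j0 j1 j2.
by rewrite (eqP (implyP (x_tail j) tail_j)) frob_zero.
Qed.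

Lemma zpt_orbit_inj p p' : p \in cycle2 L -> zpt p' \in orbit (zpt p) -> p' = p.
Proof.
move=> p_cyc; rewrite (gal_orbitE iota cardL m_gt0) => /imsetP[k _ zk].
have [fp1 fp2] := frob_cycle2 k p_cyc.
have := congr1 (fun y : pt L n => (y i0, y i1)) zk.
by rewrite /= !gal_actE !set01_i0 !set01_i1 fp1 fp2 -!surjective_pairing.
Qed.

Lemma comm_pt_zpt p : comm_pt (zpt p) = zpt (comm2 true p).
Proof. by rewrite comm_ptE special_zpt set01_i0 set01_i1 set01_set01; case: p. Qed.

Lemma comm_pt_fix x : ~~ (special x && ((x i0, x i1) \in cycle2 L)) -> comm_pt x = x.
Proof.
rewrite comm_ptE negb_and; case: (special x) => /=.
  by move=> /comm2_fix ->; rewrite set01_id.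
by rewrite comm2_false set01_id.
Qed.

Lemma comm_perm_3cycle : is_3cycle_on (Xbar iota n m) comm_perm.
Proof.
pose O p := orbit (zpt p).
have O_Xbar p : O p \in Xbar iota n m by apply: imset_f; apply: Xset_zpt.
have O_perm p : comm_perm (O p) = O (comm2 true p).
  by have [_ ->] := comm_perm_induced (Xset_zpt p); rewrite comm_pt_zpt.
have O_neq p p' : p \in cycle2 L -> p' != p -> O p' != O p.
  move=> p_cyc; apply: contraNneq => Opp'.
  by apply/eqP/(zpt_orbit_inj p_cyc); rewrite -/(O p) -Opp' gal_orbit_refl.
have [c00 c01 c10] := comm2_cycle2 L.
exists (O (0, 0)), (O (0, 1)), (O (1, 0)); split.
- by split; apply: O_Xbar.
- have := uniq_cycle2 L; rewrite /= !inE !negb_or => /andP[/andP[d01 d02] /andP[d12 _]].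
  by split; apply: O_neq; rewrite // !inE eqxx ?orbT.
- by split; rewrite O_perm ?c00 ?c01 ?c10.
move=> _ /imsetP[x x_X ->] not_cyc.
have [_ ->] := comm_perm_induced x_X; congr gal_orbit; apply: comm_pt_fix.
apply: contra not_cyc => /andP[x_sp x_cyc].
rewrite (gal_orbit_eq cardL m_gt0 (mem_orbit_zpt x_sp x_cyc)).
exact: (map_f O x_cyc).
Qed.

End ThreeCycle.

Theorem mainTheorem10 (q m n : nat) (F L : finFieldType)
  (iota : {rmorphism F -> L}) :
  #|F| = q -> #|L| = (q ^ m)%N -> (0 < m)%N -> (3 <= n)%N ->
  exists s : {perm {set pt L n}},
    in_G iota m s /\ is_3cycle_on (Xbar iota n m) s.
Proof.
move=> <- cardL m_gt0; case: n => [|[|[|n']]] // _.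
have [b b_prim] := exists_prim_root L.
have [mu mu_frob] := frob_poly_over iota cardL m_gt0 b.
exists (comm_perm iota m n' mu); split; first exact: comm_perm_in_G.
exact: (comm_perm_3cycle n' cardL m_gt0 b_prim mu_frob).
Qed.
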